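(* Let $S\subseteq\mathbb{Z}^2$. (a) If $S$ is connected, then $R(S)$ is connected or empty. (b) If $E$ is a connected subset of $R(S)$, then $S\cap Q(E)$ is connected.
   Context: The graph $\mathbf{G}$ on $\mathbb{Z}^2$ joins each point $p$ to $p\pm(1,0)$, $p\pm(0,1)$, $p+(-1,1)$, $p+(1,-1)$; a set is connected if it is connected in the subgraph of $\mathbf{G}$ it induces. For $p\in\mathbb{Z}^2$, $Q(p)=\{p,\ p+(1,0),\ p+(0,1)\}$, and $Q(E)=\bigcup_{a\in E}Q(a)$. $R(S)$ is the set of $p$ such that $S$ contains at least two points of $Q(p)$ (Toom's north-east-self majority rule applied to the configuration whose set of $1$'s is $S$). *)

From Stdlib Require Import ZArith Relations.
Open Scope Z_scope.

Definition pt := (Z * Z)%type.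
Definition zset := pt -> Prop.

Definition adjG (p q : pt) : Prop :=
  let dx := fst q - fst p in
  let dy := snd q - snd p in
  (dx = 1 /\ dy = 0) \/ (dx = -1 /\ dy = 0) \/
  (dx = 0 /\ dy = 1) \/ (dx = 0 /\ dy = -1) \/
  (dx = -1 /\ dy = 1) \/ (dx = 1 /\ dy = -1).

Definition adj_in (A : zset) (p q : pt) : Prop := A p /\ A q /\ adjG p q.

Definition connected (A : zset) : Prop :=
  (exists p, A p) /\
  forall p q, A p -> A q -> clos_refl_trans pt (adj_in A) p q.

Definition empty (A : zset) : Prop := forall p, ~ A p.

Definition Q (p : pt) : zset :=
  fun q => q = p \/ q = (fst p + 1, snd p) \/ q = (fst p, snd p + 1).

Definition QE (E : zset) : zset := fun q => exists a, E a /\ Q a q.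

Definition R (S : zset) : zset :=
  fun p => exists a b, a <> b /\ Q p a /\ Q p b /\ S a /\ S b.

Definition subset (A B : zset) : Prop := forall p, A p -> B p.
Definition inter (A B : zset) : zset := fun p => A p /\ B p.

(* Every step x ~ y of a path in S lies in a triangle Q(t) with t in R(S),
   and triangles sharing a point have equal or adjacent corners; so a path in S
   is shadowed by a path in R(S).  Conversely, the points of S in one triangle
   Q(a), a in R(S), are pairwise adjacent, and adjacent a, b in R(S) carry
   points of S in Q(a) and Q(b) that are equal or adjacent; so a path in E is
   shadowed by a path in S ∩ Q(E). *)

From Stdlib Require Import ZArith Relations Lia Classical.
Open Scope Z_scope.

Section Simulation.

Variables (A B : Type) (r : relation A) (s : relation B) (C : B -> A -> Prop).

Hypothesis step_simulation :
  forall u v p, r u v -> C p u -> exists q, C q v /\ clos_refl_trans B s p q.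

Lemma rt_simulation u v :
  clos_refl_trans A r u v ->
  forall p, C p u -> exists q, C q v /\ clos_refl_trans B s p q.
Proof.
  induction 1 as [u v Huv | u | u w v _ IHuw _ IHwv]; intros p Hp.
  - exact (step_simulation u v p Huv Hp).
  - exists p; split; [exact Hp | apply rt_refl].
  - destruct (IHuw p Hp) as [q [Hq Hpq]].
    destruct (IHwv q Hq) as [q' [Hq' Hqq']].
    exists q'; split; [exact Hq' | apply rt_trans with q; assumption].
Qed.

End Simulation.

Definition near (p q : pt) : Prop := p = q \/ adjG p q.

Lemma near_rt_adj_in (T : zset) p q :
  T p -> T q -> near p q -> clos_refl_trans pt (adj_in T) p q.
Proof.
  intros Tp Tq [<- | Hpq]; [apply rt_refl | apply rt_step; repeat split; assumption].
Qed.

Ltac solve_near :=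
  unfold near, adjG; simpl;
  first [left; f_equal; lia | right; lia].

Ltac solve_Q :=
  unfold Q; simpl;
  first [left; f_equal; lia | right; left; f_equal; lia | right; right; f_equal; lia].

Lemma Q_near a x y : Q a x -> Q a y -> near x y.
Proof.
  destruct a as [a1 a2], x as [x1 x2], y as [y1 y2]; unfold Q; simpl.
  intros Hx Hy.
  destruct Hx as [Hx | [Hx | Hx]]; destruct Hy as [Hy | [Hy | Hy]];
    injection Hx; injection Hy; intros; solve_near.
Qed.

Lemma Q_common_near p q u : Q p u -> Q q u -> near p q.
Proof.
  destruct p as [p1 p2], q as [q1 q2], u as [u1 u2]; unfold Q; simpl.
  intros Hp Hq.
  destruct Hp as [Hp | [Hp | Hp]]; destruct Hq as [Hq | [Hq | Hq]];
    injection Hp; injection Hq; intros; solve_near.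
Qed.

Lemma adjG_neq p q : adjG p q -> p <> q.
Proof.
  destruct p as [p1 p2], q as [q1 q2]; unfold adjG; simpl.
  intros Hpq Heq; injection Heq; lia.
Qed.

Lemma adjG_common_Q x y : adjG x y -> exists t, Q t x /\ Q t y.
Proof.
  destruct x as [x1 x2], y as [y1 y2]; unfold adjG; simpl.
  intros [[H1 H2] | [[H1 H2] | [[H1 H2] | [[H1 H2] | [[H1 H2] | [H1 H2]]]]]];
    [ exists (x1, x2) | exists (y1, y2) | exists (x1, x2)
    | exists (y1, y2) | exists (y1, x2) | exists (x1, y2) ];
    split; solve_Q.
Qed.

Lemma R_of_adjG S x y :
  S x -> S y -> adjG x y -> exists t, R S t /\ Q t x /\ Q t y.
Proof.
  intros Sx Sy Hxy.
  destruct (adjG_common_Q x y Hxy) as [t [Qx Qy]].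
  exists t; split; [| split; assumption].
  exists x, y; repeat split; try assumption.
  exact (adjG_neq x y Hxy).
Qed.

Lemma R_witness S p : R S p -> exists x, S x /\ Q p x.
Proof.
  intros [x [_ [_ [Qx [_ [Sx _]]]]]]; exists x; split; assumption.
Qed.

Lemma R_cases S a1 a2 :
  R S (a1, a2) ->
  (S (a1, a2) /\ S (a1 + 1, a2)) \/ (S (a1, a2) /\ S (a1, a2 + 1)) \/
  (S (a1 + 1, a2) /\ S (a1, a2 + 1)).
Proof.
  intros [x [y [Hxy [Qx [Qy [Sx Sy]]]]]]; unfold Q in Qx, Qy; simpl in Qx, Qy.
  destruct Qx as [-> | [-> | ->]]; destruct Qy as [-> | [-> | ->]];
    first [ left; split; assumption | right; left; split; assumption
          | right; right; split; assumption | congruence ].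
Qed.

Lemma R_adjG_near_witnesses S a b :
  R S a -> R S b -> adjG a b ->
  exists x y, S x /\ S y /\ Q a x /\ Q b y /\ near x y.
Proof.
  destruct a as [a1 a2], b as [b1 b2]; intros Ha Hb Hab.
  apply R_cases in Ha; apply R_cases in Hb; unfold adjG in Hab; simpl in Hab.
  destruct Hab as [[H1 H2] | [[H1 H2] | [[H1 H2] | [[H1 H2] | [[H1 H2] | [H1 H2]]]]]];
    destruct Ha as [[? ?] | [[? ?] | [? ?]]]; destruct Hb as [[? ?] | [[? ?] | [? ?]]];
    match goal with
    | Sx : S ?x, Sy : S ?y |- _ =>
        exists x, y; split; [exact Sx |]; split; [exact Sy |];
        split; [solve_Q |]; split; [solve_Q | solve_near]
    end.
Qed.

Lemma R_connected S : connected S -> (exists p, R S p) -> connected (R S).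
Proof.
  intros [_ HS] Hne; split; [exact Hne |].
  assert (Hstep : forall w w' t, adj_in S w w' -> R S t /\ Q t w ->
            exists t', (R S t' /\ Q t' w') /\ clos_refl_trans pt (adj_in (R S)) t t').
  { intros w w' t [Sw [Sw' Hww']] [Rt Qw].
    destruct (R_of_adjG S w w' Sw Sw' Hww') as [t' [Rt' [Qw_t' Qw']]].
    exists t'; split; [split; assumption |].
    apply near_rt_adj_in; try assumption.
    exact (Q_common_near t t' w Qw Qw_t'). }
  intros p q Rp Rq.
  destruct (R_witness S p Rp) as [u [Su Qu]].
  destruct (R_witness S q Rq) as [v [Sv Qv]].
  destruct (rt_simulation _ _ _ _ _ Hstep u v (HS u v Su Sv) p (conj Rp Qu))
    as [q' [[Rq' Qv'] Hpq']].
  apply rt_trans with q'; [exact Hpq' |].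
  apply near_rt_adj_in; try assumption.
  exact (Q_common_near q' q v Qv' Qv).
Qed.

Lemma inter_QE_connected S E :
  connected E -> subset E (R S) -> connected (inter S (QE E)).
Proof.
  intros [[a Ea] HE] HER.
  assert (Hmem : forall c x, E c -> S x -> Q c x -> inter S (QE E) x)
    by (intros c x Ec Sx Qx; split; [exact Sx | exists c; split; assumption]).
  split.
  - destruct (R_witness S a (HER a Ea)) as [x [Sx Qx]].
    exists x; exact (Hmem a x Ea Sx Qx).
  - assert (Hstep : forall c c' z, adj_in E c c' -> S z /\ Q c z ->
              exists z', (S z' /\ Q c' z') /\
                         clos_refl_trans pt (adj_in (inter S (QE E))) z z').
    { intros c c' z [Ec [Ec' Hcc']] [Sz Qz].
      destruct (R_adjG_near_witnesses S c c' (HER c Ec) (HER c' Ec') Hcc')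
        as [w [w' [Sw [Sw' [Qw [Qw' Hww']]]]]].
      exists w'; split; [split; assumption |].
      apply rt_trans with w; apply near_rt_adj_in; eauto using Q_near. }
    intros x y [Sx [a' [Ea' Qx]]] [Sy [b' [Eb' Qy]]].
    destruct (rt_simulation _ _ _ _ _ Hstep a' b' (HE a' b' Ea' Eb') x (conj Sx Qx))
      as [y' [[Sy' Qy'] Hxy']].
    apply rt_trans with y'; [exact Hxy' |].
    apply near_rt_adj_in; eauto using Q_near.
Qed.

Theorem fact3p1 :
  forall S : zset,
    (connected S -> connected (R S) \/ empty (R S)) /\
    (forall E : zset, connected E -> subset E (R S) ->
       connected (inter S (QE E))).
Proof.
  intro S; split.
  - intro HS.
    destruct (classic (exists p, R S p)) as [Hne | Hempty].
    + left; exact (R_connected S HS Hne).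
    + right; intros p Rp; apply Hempty; exists p; exact Rp.
  - exact (inter_QE_connected S).
Qed.
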